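(* Assume Case (I) or Case (II) holds. Let $\mathbf y^\sharp$ be any solution of $\mathbf z=\mathbf H\mathbf y$, let $r>0$, and let $\mathcal M^\sharp(r)=\{\mathbf w\in\mathbb R^m:\|\mathbf w-\mathbf y^\sharp\|\le r\}$. Then, for any graph signal and weights satisfying the Weights Assumption and any $K>0$: (i) $(\mathcal M^\sharp(r))^N=\mathcal M^\sharp(r)\times\cdots\times\mathcal M^\sharp(r)$ is a positively invariant set for the ''consensus + projection'' flow; (ii) $(\mathcal M^\sharp(r))^N\cap(\mathcal A_1\times\cdots\times\mathcal A_N)$ is a positively invariant set for the ''projection consensus'' flow.
   Context: Setting: $N,m\ge 1$; $\mathbf H\in\mathbb R^{N\times m}$ has rows $\mathbf h_1^{T},\dots,\mathbf h_N^{T}$ with $\|\mathbf h_i\|=1$ for all $i$; $\mathbf z=(z_1,\dots,z_N)^T\in\mathbb R^N$; the equation is $\mathbf z=\mathbf H\mathbf y$. Let $\mathcal A_i=\{\mathbf y\in\mathbb R^m:\mathbf h_i^T\mathbf y=z_i\}$ with Euclidean projection $\mathcal P_{\mathcal A_i}(\mathbf y)=(I-\mathbf h_i\mathbf h_i^T)\mathbf y+z_i\mathbf h_i$. Case (I): $\mathrm{rank}(\mathbf H)=m$ and $\mathbf z$ in the column space of $\mathbf H$. Case (II): $\mathrm{rank}(\mathbf H)<m$ and $\mathbf z$ in the column space of $\mathbf H$. Network: $\mathrm V=\{1,\dots,N\}$; a graph signal assigns to each $t\ge0$ a digraph $\mathrm G_{\sigma(t)}=(\mathrm V,\mathrm E_{\sigma(t)})$,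 $\mathrm N_i(t)=\{j:(j,i)\in\mathrm E_{\sigma(t)}\}$; Weights Assumption: $a_{ij}:[0,\infty)\to(0,\infty)$ continuous except on a Lebesgue-null set and bounded by some $a^\ast>0$. Flows: ''consensus + projection'': $\dot{\mathbf x}_i=K\sum_{j\in\mathrm N_i(t)}a_{ij}(t)(\mathbf x_j-\mathbf x_i)+\mathcal P_{\mathcal A_i}(\mathbf x_i)-\mathbf x_i$; ''projection consensus'': $\dot{\mathbf x}_i=\sum_{j\in\mathrm N_i(t)}a_{ij}(t)\big(\mathcal P_{\mathcal A_i}(\mathbf x_j)-\mathcal P_{\mathcal A_i}(\mathbf x_i)\big)$, $i\in\mathrm V$. A set $\Omega\subset(\mathbb R^m)^N$ is positively invariant if every trajectory with $\mathbf x(t_0)\in\Omega$ satisfies $\mathbf x(t)\in\Omega$ for all $t\ge t_0$. *)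

From Stdlib Require Import Reals Lra Lia.
Open Scope R_scope.

(* Vectors in R^m are functions nat -> R, only indices k < m are meaningful.
   A configuration of the network (element of (R^m)^N) is x : nat -> nat -> R,
   x i k = k-th coordinate of agent i's state (i < N, k < m). *)

Fixpoint rsum (n : nat) (f : nat -> R) : R :=
  match n with
  | O => 0
  | S p => rsum p f + f p
  end.

Definition dot (m : nat) (u v : nat -> R) : R := rsum m (fun k => u k * v k).

Definition dist2 (m : nat) (u v : nat -> R) : R :=
  rsum m (fun k => (u k - v k) ^ 2).

Definition mat_vec (m : nat) (H : nat -> nat -> R) (y : nat -> R) : nat -> R :=
  fun i => dot m (H i) y.

(* Euclidean projection onto A_i = {y | h_i^T y = z_i} (with ||h_i|| = 1):
   P_{A_i}(y) = (I - h_i h_i^T) y + z_i h_i *)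
Definition projA (m : nat) (H : nat -> nat -> R) (z : nat -> R) (i : nat)
    (y : nat -> R) : nat -> R :=
  fun k => y k - H i k * dot m (H i) y + z i * H i k.

Definition inA (m : nat) (H : nat -> nat -> R) (z : nat -> R) (i : nat)
    (y : nat -> R) : Prop := dot m (H i) y = z i.

Definition null_set (S : R -> Prop) : Prop :=
  forall eps, 0 < eps ->
    exists c d : nat -> R,
      (forall n, c n <= d n) /\
      (forall p, rsum p (fun n => d n - c n) <= eps) /\
      (forall t, S t -> exists n, c n < t < d n).

(* absolute continuity of f on [a,b] : for finite families of pairwise
   disjoint subintervals [u_l, v_l] (listed in increasing order) *)
Definition abs_continuous_on (f : R -> R) (a b : R) : Prop :=
  forall eps, 0 < eps -> exists delta, 0 < delta /\
    forall (p : nat) (u v : nat -> R),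
      (forall l, (l < p)%nat -> a <= u l /\ u l <= v l /\ v l <= b) ->
      (forall l, (S l < p)%nat -> v l <= u (S l)) ->
      rsum p (fun l => v l - u l) < delta ->
      rsum p (fun l => Rabs (f (v l) - f (u l))) < eps.

(* Graph signal: for each time t the digraph G_sigma(t) on V = {0..N-1},
   given by its edge relation: E t j i = true  iff  (j,i) in E_sigma(t),
   i.e. j in N_i(t). *)
Definition graph_signal := R -> nat -> nat -> bool.

Definition weights := nat -> nat -> R -> R.

Definition weights_assumption (N : nat) (a : weights) : Prop :=
  exists astar, 0 < astar /\
    forall i j, (i < N)%nat -> (j < N)%nat ->
      (forall t, 0 <= t -> 0 < a i j t <= astar) /\
      exists S, null_set S /\
        forall t, 0 < t -> ~ S t -> continuity_pt (a i j) t.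

Definition nbr_sum (N : nat) (E : graph_signal) (i : nat) (t : R)
    (g : nat -> R) : R :=
  rsum N (fun j => if E t j i then g j else 0).

Definition vfield := R -> (nat -> nat -> R) -> nat -> nat -> R.

Definition cons_proj_field (N m : nat) (H : nat -> nat -> R) (z : nat -> R)
    (E : graph_signal) (a : weights) (K : R) : vfield :=
  fun t x i k =>
    K * nbr_sum N E i t (fun j => a i j t * (x j k - x i k))
    + (projA m H z i (x i) k - x i k).

Definition proj_cons_field (N m : nat) (H : nat -> nat -> R) (z : nat -> R)
    (E : graph_signal) (a : weights) : vfield :=
  fun t x i k =>
    nbr_sum N E i t
      (fun j => a i j t * (projA m H z i (x j) k - projA m H z i (x i) k)).

(* Trajectory (Caratheodory solution) of dx/dt = F(t,x) starting at time t0,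
   defined on [t0, +oo): every coordinate is absolutely continuous on every
   compact [t0,T] and satisfies the ODE for almost every t > t0. *)
Definition trajectory (N m : nat) (F : vfield) (t0 : R)
    (x : R -> nat -> nat -> R) : Prop :=
  (forall i k, (i < N)%nat -> (k < m)%nat ->
     forall T, t0 <= T -> abs_continuous_on (fun t => x t i k) t0 T) /\
  exists S, null_set S /\
    forall t, t0 < t -> ~ S t ->
      forall i k, (i < N)%nat -> (k < m)%nat ->
        derivable_pt_lim (fun s => x s i k) t (F t (x t) i k).

Definition positively_invariant (N m : nat) (F : vfield)
    (Omega : (nat -> nat -> R) -> Prop) : Prop :=
  forall (t0 : R) (x : R -> nat -> nat -> R),
    0 <= t0 -> trajectory N m F t0 x -> Omega (x t0) ->
    forall t, t0 <= t -> Omega (x t).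

Definition ballN (N m : nat) (ys : nat -> R) (r : R)
    (x : nat -> nat -> R) : Prop :=
  forall i, (i < N)%nat -> dist2 m (x i) ys <= r ^ 2.

Definition ballN_A (N m : nat) (H : nat -> nat -> R) (z : nat -> R)
    (ys : nat -> R) (r : R) (x : nat -> nat -> R) : Prop :=
  ballN N m ys r x /\ forall i, (i < N)%nat -> inA m H z i (x i).

From Stdlib Require Import Reals Lra Lia Classical.
Open Scope R_scope.

(* Along a trajectory, V(t) = max_i |x_i(t) - ys|^2 is absolutely continuous.  At almost
   every time, each agent attaining the maximum moves inwards: its neighbours are no farther
   from ys than itself, and so are their projections onto A_i, a closed affine set containing
   ys; the projection term of the "consensus + projection" flow contributes
   -(h_i^T x_i - z_i)^2.  Hence the upper Dini derivatives of V are nonpositive almost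
   everywhere, which for an absolutely continuous function forces V to be nonincreasing.  For
   the "projection consensus" flow, h_i^T x_i has zero derivative and stays equal to z_i. *)

(** * Finite sums and maxima *)

Lemma rsum_ext n f g : (forall k, (k < n)%nat -> f k = g k) -> rsum n f = rsum n g.
Proof.
  induction n as [|n IH]; intros Hfg; simpl; [reflexivity|].
  rewrite IH by (intros; apply Hfg; lia). rewrite Hfg by lia. reflexivity.
Qed.

Lemma rsum_le n f g : (forall k, (k < n)%nat -> f k <= g k) -> rsum n f <= rsum n g.
Proof.
  induction n as [|n IH]; intros Hfg; simpl; [lra|].
  assert (rsum n f <= rsum n g) by (apply IH; intros; apply Hfg; lia).
  assert (f n <= g n) by (apply Hfg; lia). lra.
Qed.

Lemma rsum_add n f g : rsum n (fun k => f k + g k) = rsum n f + rsum n g.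
Proof. induction n; simpl; [lra|]. rewrite IHn. lra. Qed.

Lemma rsum_sub n f g : rsum n (fun k => f k - g k) = rsum n f - rsum n g.
Proof. induction n; simpl; [lra|]. rewrite IHn. lra. Qed.

Lemma rsum_scal n c f : rsum n (fun k => c * f k) = c * rsum n f.
Proof. induction n; simpl; [lra|]. rewrite IHn. lra. Qed.

Lemma rsum_0 n : rsum n (fun _ => 0) = 0.
Proof. induction n; simpl; [lra|]. rewrite IHn. lra. Qed.

Lemma rsum_nonpos n f : (forall k, (k < n)%nat -> f k <= 0) -> rsum n f <= 0.
Proof. intros. rewrite <- (rsum_0 n). apply rsum_le. auto. Qed.

Lemma rsum_Rabs_le n f : Rabs (rsum n f) <= rsum n (fun k => Rabs (f k)).
Proof.
  induction n; simpl; [rewrite Rabs_R0; lra|].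
  eapply Rle_trans; [apply Rabs_triang|lra].
Qed.

Lemma rsum_comm n m (f : nat -> nat -> R) :
  rsum n (fun i => rsum m (fun k => f i k)) = rsum m (fun k => rsum n (fun i => f i k)).
Proof. induction n; simpl; [now rewrite rsum_0|]. rewrite IHn, <- rsum_add. reflexivity. Qed.

Lemma rsum_indicator P j (g : nat -> R) : (j < P)%nat ->
  rsum P (fun k => if Nat.eqb k j then g k else 0) = g j.
Proof.
  induction P as [|P IH]; intros Hj; [lia|]. simpl.
  destruct (Nat.eqb P j) eqn:E.
  - apply Nat.eqb_eq in E; subst j.
    rewrite (rsum_ext _ _ (fun _ => 0)), rsum_0; [lra|].
    intros k Hk. destruct (Nat.eqb_spec k P); [lia|reflexivity].
  - apply Nat.eqb_neq in E. rewrite IH by lia. lra.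
Qed.

Fixpoint in_image (p : nat) (n : nat -> nat) (k : nat) : bool :=
  match p with O => false | S q => in_image q n k || Nat.eqb k (n q) end.

Lemma in_imageP p n k : in_image p n k = true -> exists l, (l < p)%nat /\ n l = k.
Proof.
  induction p as [|p IH]; simpl; intros Hk; [discriminate|].
  apply Bool.orb_true_iff in Hk as [Hk|Hk].
  - destruct (IH Hk) as [l [Hl Hnl]]. exists l; split; [lia|assumption].
  - apply Nat.eqb_eq in Hk. exists p; split; [lia|auto].
Qed.

Lemma rsum_in_image p P (n : nat -> nat) (g : nat -> R) :
  (forall l, (l < p)%nat -> (n l < P)%nat) ->
  (forall l l', (l < l')%nat -> (l' < p)%nat -> n l <> n l') ->
  rsum p (fun l => g (n l)) = rsum P (fun k => if in_image p n k then g k else 0).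
Proof.
  intros Hb Hinj. induction p as [|p IH]; simpl.
  - now rewrite rsum_0.
  - rewrite IH by (intros; first [apply Hb | apply Hinj]; lia).
    rewrite <- (rsum_indicator P (n p) g) by (apply Hb; lia).
    rewrite <- rsum_add. apply rsum_ext. intros k Hk.
    destruct (in_image p n k) eqn:E1, (Nat.eqb_spec k (n p)); simpl; try lra.
    destruct (in_imageP p n k E1) as [l [Hl Hnl]].
    exfalso. apply (Hinj l p); lia.
Qed.

Lemma bounded_prefix p (n : nat -> nat) : exists P, forall l, (l < p)%nat -> (n l < P)%nat.
Proof.
  induction p as [|p [P HP]]; [exists O; lia|].
  exists (Nat.max P (S (n p))). intros l Hl.
  destruct (Nat.eq_dec l p) as [->|]; [lia|]. specialize (HP l ltac:(lia)). lia.
Qed.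

Lemma rsum_injective_le p (n : nat -> nat) (g : nat -> R) :
  (forall l l', (l < l')%nat -> (l' < p)%nat -> n l <> n l') ->
  (forall k, 0 <= g k) ->
  exists P, rsum p (fun l => g (n l)) <= rsum P g.
Proof.
  intros Hinj Hg. destruct (bounded_prefix p n) as [P HP]. exists P.
  rewrite (rsum_in_image p P) by assumption.
  apply rsum_le. intros k _. destruct (in_image p n k); [lra|apply Hg].
Qed.

Fixpoint rmax (n : nat) (g : nat -> R) : R :=
  match n with O => 0 | S p => Rmax (rmax p g) (g p) end.

Lemma rmax_ge0 n g : 0 <= rmax n g.
Proof. induction n; simpl; [lra|]. eapply Rle_trans; [exact IHn|apply Rmax_l]. Qed.

Lemma rmax_ge n g i : (i < n)%nat -> g i <= rmax n g.
Proof.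
  induction n as [|n IH]; intros Hi; [lia|]. simpl.
  destruct (Nat.eq_dec i n) as [->|]; [apply Rmax_r|].
  eapply Rle_trans; [apply IH; lia|apply Rmax_l].
Qed.

Lemma rmax_lub n g c : 0 <= c -> (forall i, (i < n)%nat -> g i <= c) -> rmax n g <= c.
Proof.
  induction n; intros Hc Hg; simpl; [assumption|].
  apply Rmax_lub; [apply IHn; auto|apply Hg; lia].
Qed.

Lemma rmax_attained n g : rmax n g = 0 \/ exists i, (i < n)%nat /\ rmax n g = g i.
Proof.
  induction n as [|n IH]; simpl; [now left|]. unfold Rmax.
  destruct (Rle_dec (rmax n g) (g n)); [right; exists n; split; auto|].
  destruct IH as [?|[i [? ?]]]; [now left|right; exists i; split; auto].
Qed.

Lemma rmax_Rabs_sub n g h : Rabs (rmax n g - rmax n h) <= rsum n (fun i => Rabs (g i - h i)).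
Proof.
  induction n; simpl; [rewrite Rminus_0_r, Rabs_R0; lra|].
  assert (forall a b c d, Rabs (Rmax a b - Rmax c d) <= Rabs (a - c) + Rabs (b - d))
    as Rmax_Rabs_sub.
  { intros a b c d. unfold Rmax.
    destruct (Rle_dec a b), (Rle_dec c d); unfold Rabs; repeat destruct Rcase_abs; lra. }
  eapply Rle_trans; [apply Rmax_Rabs_sub|lra].
Qed.

(** * Absolute continuity *)

(* [abs_continuous_on f a b] is [ac_interval_fun (fun u v => Rabs (f v - f u)) a b]. *)
Definition ac_interval_fun (Phi : R -> R -> R) (a b : R) : Prop :=
  forall eps, 0 < eps -> exists delta, 0 < delta /\
    forall (p : nat) (u v : nat -> R),
      (forall l, (l < p)%nat -> a <= u l /\ u l <= v l /\ v l <= b) ->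
      (forall l, (S l < p)%nat -> v l <= u (S l)) ->
      rsum p (fun l => v l - u l) < delta ->
      rsum p (fun l => Phi (u l) (v l)) < eps.

Lemma abs_continuous_on_dominated f Psi a b :
  (forall u v, a <= u -> u <= v -> v <= b -> Rabs (f v - f u) <= Psi u v) ->
  ac_interval_fun Psi a b -> abs_continuous_on f a b.
Proof.
  intros Hle HPsi eps Heps. destruct (HPsi eps Heps) as [delta [Hdelta Hsmall]].
  exists delta; split; [assumption|]. intros p u v Huv Hchain Hlen.
  eapply Rle_lt_trans; [|apply (Hsmall p u v); assumption].
  apply rsum_le. intros l Hl. destruct (Huv l Hl) as [? [? ?]]. apply Hle; assumption.
Qed.

Lemma ac_interval_fun_scal Phi c a b :
  0 <= c -> ac_interval_fun Phi a b -> ac_interval_fun (fun u v => c * Phi u v) a b.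
Proof.
  intros Hc HPhi eps Heps.
  destruct (HPhi (eps / (c + 1))) as [delta [Hdelta Hsmall]];
    [apply Rdiv_lt_0_compat; lra|].
  exists delta; split; [assumption|]. intros p u v Huv Hchain Hlen.
  rewrite rsum_scal. specialize (Hsmall p u v Huv Hchain Hlen).
  assert (c * (eps / (c + 1)) < eps).
  { apply (Rmult_lt_reg_r (c + 1)); [lra|].
    unfold Rdiv. rewrite Rmult_assoc, Rmult_assoc, Rinv_l by lra. nra. }
  assert (c * rsum p (fun l => Phi (u l) (v l)) <= c * (eps / (c + 1)))
    by (apply Rmult_le_compat_l; lra).
  lra.
Qed.

Lemma ac_interval_fun_sum n (Phi : nat -> R -> R -> R) a b :
  (forall j, (j < n)%nat -> ac_interval_fun (Phi j) a b) ->
  ac_interval_fun (fun u v => rsum n (fun j => Phi j u v)) a b.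
Proof.
  induction n as [|n IH]; intros HPhi eps Heps.
  - exists 1; split; [lra|]. intros. simpl. now rewrite rsum_0.
  - destruct (IH (fun j Hj => HPhi j (Nat.lt_lt_succ_r _ _ Hj)) (eps / 2))
      as [d1 [Hd1 H1]]; [lra|].
    destruct (HPhi n (Nat.lt_succ_diag_r n) (eps / 2)) as [d2 [Hd2 H2]]; [lra|].
    exists (Rmin d1 d2); split; [apply Rmin_pos; assumption|].
    intros p u v Huv Hchain Hlen. simpl. rewrite rsum_add.
    pose proof (Rmin_l d1 d2). pose proof (Rmin_r d1 d2).
    specialize (H1 p u v Huv Hchain ltac:(lra)).
    specialize (H2 p u v Huv Hchain ltac:(lra)). lra.
Qed.

Lemma abs_continuous_on_sub f a b a' b' :
  a <= a' -> b' <= b -> abs_continuous_on f a b -> abs_continuous_on f a' b'.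
Proof.
  intros Ha Hb Hf eps Heps. destruct (Hf eps Heps) as [delta [Hdelta Hsmall]].
  exists delta; split; [assumption|]. intros p u v Huv Hchain Hlen.
  apply Hsmall; [|assumption..].
  intros l Hl. destruct (Huv l Hl) as [? [? ?]]. repeat split; lra.
Qed.

Lemma abs_continuous_on_unif f a b : abs_continuous_on f a b ->
  forall eps, 0 < eps -> exists delta, 0 < delta /\
    forall u v, a <= u -> u <= v -> v <= b -> v - u < delta -> Rabs (f v - f u) < eps.
Proof.
  intros Hf eps Heps. destruct (Hf eps Heps) as [delta [Hdelta Hsmall]].
  exists delta; split; [assumption|]. intros u v Hu Huv Hv Hlen.
  specialize (Hsmall 1%nat (fun _ => u) (fun _ => v)). simpl in Hsmall.
  enough (0 + Rabs (f v - f u) < eps) by lra.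
  apply Hsmall; [intros; repeat split; lra|intros; lia|lra].
Qed.

Lemma abs_continuous_on_bounded f a b : a <= b -> abs_continuous_on f a b ->
  exists M, forall t, a <= t <= b -> Rabs (f t) <= M.
Proof.
  intros Hab Hf.
  (* [g] extends [f] by constants outside [a, b], so that it is continuous on R. *)
  set (g := fun t => Rabs (f (Rmax a (Rmin b t)))).
  assert (Hclamp : forall t, a <= t <= b -> Rmax a (Rmin b t) = t).
  { intros t Ht. rewrite Rmin_right, Rmax_right by lra. reflexivity. }
  assert (Hcont : forall c, continuity_pt g c).
  { intros c eps Heps.
    destruct (abs_continuous_on_unif f a b Hf eps Heps) as [delta [Hdelta Hunif]].
    exists delta; split; [assumption|]. intros t [_ Ht]. simpl in *. unfold R_dist in *.
    unfold g. eapply Rle_lt_trans; [apply Rabs_triang_inv2|].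
    set (ct := Rmax a (Rmin b t)). set (cc := Rmax a (Rmin b c)).
    assert (a <= ct <= b /\ a <= cc <= b /\ Rabs (ct - cc) <= Rabs (t - c)) as [Hct [Hcc Hd]].
    { unfold ct, cc, Rmax, Rmin.
      repeat destruct Rle_dec; unfold Rabs; repeat destruct Rcase_abs; lra. }
    destruct (Rle_dec cc ct).
    - apply Hunif; try lra. rewrite Rabs_pos_eq in Hd by lra. lra.
    - rewrite <- Rabs_Ropp. replace (- (f ct - f cc)) with (f cc - f ct) by ring.
      apply Hunif; try lra. rewrite Rabs_left in Hd by lra. lra. }
  destruct (continuity_ab_maj g a b Hab (fun c _ => Hcont c)) as [tM [HtM _]].
  exists (g tM). intros t Ht. specialize (HtM t Ht). unfold g in HtM. now rewrite Hclamp in HtM.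
Qed.

(** * Monotonicity from Dini derivatives *)

Definition upper_dini_nonpos (V : R -> R) (s : R) : Prop :=
  (forall e, 0 < e -> exists h, 0 < h /\ forall t, s < t < s + h -> V t <= V s + e * (t - s)) /\
  (forall e, 0 < e -> exists h, 0 < h /\ forall t, s - h < t < s -> V s <= V t + e * (s - t)).

(* Fix [eps], the [delta] that absolute continuity of [V] gives for it, and a cover of the
   exceptional set by intervals [(c n, d n)] of total length [delta / 2].  Sweeping [a, b]
   from left to right, [V] grows at rate at most [eps] at good points, and across covering
   intervals by at most the variation of [V] on a chain of disjoint subintervals of total
   length [< delta], which is [< eps]. *)
Section Creep.
Variables (V : R -> R) (a b eps delta : R) (c d : nat -> R).
Hypothesis Hab : a < b.
Hypothesis Heps : 0 < eps.
Hypothesis Hdelta : 0 < delta.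
Hypothesis Hac : forall (p : nat) (u v : nat -> R),
  (forall l, (l < p)%nat -> a <= u l /\ u l <= v l /\ v l <= b) ->
  (forall l, (S l < p)%nat -> v l <= u (S l)) ->
  rsum p (fun l => v l - u l) < delta ->
  rsum p (fun l => Rabs (V (v l) - V (u l))) < eps.
Hypothesis Hcd : forall n, c n <= d n.
Hypothesis Hcover_len : forall p, rsum p (fun n => d n - c n) <= delta / 2.

Definition covering_chain (t : R) (p : nat) (u v : nat -> R) (n : nat -> nat) : Prop :=
  (forall l, (l < p)%nat -> a <= u l /\ u l <= v l /\ v l <= t /\ u l < b /\
     c (n l) < u l /\ u l < d (n l) /\ v l = Rmin (d (n l)) b) /\
  (forall l, (S l < p)%nat -> v l <= u (S l)).

Definition creep_bound (t : R) : Prop :=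
  a <= t <= b /\ exists p u v n, covering_chain t p u v n /\
    V t - V a <= eps * (t - a) + rsum p (fun l => Rabs (V (v l) - V (u l))).

Lemma covering_chain_sorted t p u v n : covering_chain t p u v n ->
  forall l l', (l < l')%nat -> (l' < p)%nat -> v l <= u l'.
Proof.
  intros [Hint Hchain] l l' Hll'. induction l' as [|l' IH]; intros Hl'; [lia|].
  destruct (Nat.eq_dec l l') as [->|]; [apply Hchain; lia|].
  destruct (Hint l' ltac:(lia)) as [? [? _]].
  specialize (Hchain l' Hl'). specialize (IH ltac:(lia) ltac:(lia)). lra.
Qed.

Lemma covering_chain_small t p u v n : t <= b -> covering_chain t p u v n ->
  rsum p (fun l => Rabs (V (v l) - V (u l))) < eps.
Proof.
  intros Htb Hcc. pose proof Hcc as [Hint Hchain]. apply Hac; [|exact Hchain|].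
  { intros l Hl. destruct (Hint l Hl) as [? [? [? _]]]. repeat split; lra. }
  assert (Hinj : forall l l', (l < l')%nat -> (l' < p)%nat -> n l <> n l').
  { intros l l' Hll' Hl' Heq.
    pose proof (covering_chain_sorted t p u v n Hcc l l' Hll' Hl').
    destruct (Hint l ltac:(lia)) as [_ [_ [_ [_ [_ [_ Hvl]]]]]].
    destruct (Hint l' Hl') as [_ [_ [_ [? [_ [? _]]]]]].
    rewrite Heq in Hvl. unfold Rmin in Hvl. destruct Rle_dec; lra. }
  destruct (rsum_injective_le p n (fun k => d k - c k) Hinj) as [P HP];
    [intros k; specialize (Hcd k); lra|].
  specialize (Hcover_len P).
  enough (rsum p (fun l => v l - u l) <= rsum p (fun l => d (n l) - c (n l))) by lra.
  apply rsum_le. intros l Hl. destruct (Hint l Hl) as [_ [_ [_ [_ [? [_ Hvl]]]]]].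
  pose proof (Rmin_l (d (n l)) b). lra.
Qed.

Lemma creep_bound_a : creep_bound a.
Proof.
  split; [lra|]. exists 0%nat, (fun _ => 0), (fun _ => 0), (fun _ => 0%nat).
  split; [split; intros; lia|]. simpl. lra.
Qed.

Lemma creep_bound_step t t' : creep_bound t -> t <= t' <= b ->
  V t' <= V t + eps * (t' - t) -> creep_bound t'.
Proof.
  intros [Ht [p [u [v [n [[Hint Hchain] Hbound]]]]]] Htt' HV. split; [lra|].
  exists p, u, v, n. split; [split; [|exact Hchain]|lra].
  intros l Hl. destruct (Hint l Hl) as [? [? [? ?]]]. repeat split; try tauto; lra.
Qed.

Lemma creep_bound_jump t k : creep_bound t -> t < b -> c k < t < d k ->
  creep_bound (Rmin (d k) b).
Proof.
  intros [Ht [p [u [v [n [[Hint Hchain] Hbound]]]]]] Htb Hk.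
  set (t' := Rmin (d k) b).
  assert (t <= t' <= b) by (split; [apply Rmin_glb; lra|apply Rmin_r]).
  split; [lra|].
  exists (S p), (fun l => if Nat.ltb l p then u l else t),
    (fun l => if Nat.ltb l p then v l else t'),
    (fun l => if Nat.ltb l p then n l else k).
  split; [split|].
  - intros l Hl. destruct (Nat.ltb_spec l p).
    + destruct (Hint l ltac:(lia)) as [? [? [? ?]]]. repeat split; try tauto; lra.
    + repeat split; try lra; tauto.
  - intros l Hl. destruct (Nat.ltb_spec l p), (Nat.ltb_spec (S l) p); try lia.
    + apply Hchain; assumption.
    + destruct (Hint l ltac:(lia)) as [? [? [? ?]]]. lra.
  - simpl. rewrite Nat.ltb_irrefl.
    rewrite (rsum_ext p _ (fun l => Rabs (V (v l) - V (u l))))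
      by (intros l Hl; apply Nat.ltb_lt in Hl; now rewrite Hl).
    pose proof (Rle_abs (V t' - V t)).
    assert (eps * (t - a) <= eps * (t' - a)) by (apply Rmult_le_compat_l; lra). lra.
Qed.

Variable S : R -> Prop.
Hypothesis Hcover : forall s, S s -> exists n, c n < s < d n.
Hypothesis Hdini : forall s, a <= s <= b -> ~ S s -> upper_dini_nonpos V s.

Lemma creep_bound_left_closed s : a <= s <= b -> ~ S s ->
  (forall y, y < s -> exists t, creep_bound t /\ y < t <= s) -> creep_bound s.
Proof.
  intros Hs HS Happrox. destruct (Hdini s Hs HS) as [_ Hleft].
  destruct (Hleft eps Heps) as [h [Hh Hslope]].
  destruct (Happrox (s - h) ltac:(lra)) as [t [Ht [Hth Hts]]].
  destruct (Req_dec t s) as [<-|]; [assumption|].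
  apply (creep_bound_step t s Ht); [lra|]. specialize (Hslope t ltac:(lra)). lra.
Qed.

Lemma creep_bound_right_open s : a <= s < b -> ~ S s -> creep_bound s ->
  exists t, s < t /\ creep_bound t.
Proof.
  intros Hs HS Hbound. destruct (Hdini s ltac:(lra) HS) as [Hright _].
  destruct (Hright eps Heps) as [h [Hh Hslope]].
  set (t := Rmin (s + h / 2) b).
  assert (s < t <= s + h / 2 /\ t <= b) as [Ht Htb].
  { unfold t, Rmin. destruct Rle_dec; lra. }
  exists t. split; [lra|]. apply (creep_bound_step s t Hbound); [lra|]. apply Hslope. lra.
Qed.

Lemma creep_bound_b : creep_bound b.
Proof.
  destruct (completeness creep_bound) as [s [Hub Hlub]].
  - exists b. intros t [Ht _]. lra.
  - exists a. apply creep_bound_a.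
  - assert (Has : a <= s) by (apply Hub, creep_bound_a).
    assert (Hsb : s <= b) by (apply Hlub; intros t [Ht _]; lra).
    assert (Happrox : forall y, y < s -> exists t, creep_bound t /\ y < t <= s).
    { intros y Hy. apply NNPP. intros Hno. enough (s <= y) by lra.
      apply Hlub. intros t Ht. apply Rnot_lt_le. intros Hyt.
      apply Hno. exists t. split; [assumption|split; [lra|apply Hub, Ht]]. }
    destruct (classic (S s)) as [HS|HS].
    + destruct (Hcover s HS) as [k [Hck Hdk]].
      destruct (Happrox (c k) Hck) as [t [Ht [Hct Hts]]].
      destruct (Req_dec t b) as [<-|Htb]; [assumption|].
      assert (Hjump : creep_bound (Rmin (d k) b))
        by (apply (creep_bound_jump t); [assumption|destruct Ht; lra|lra]).
      unfold Rmin in Hjump. destruct Rle_dec; [|assumption].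
      specialize (Hub _ Hjump). lra.
    + assert (Hbound : creep_bound s) by (apply creep_bound_left_closed; auto).
      destruct (Req_dec s b) as [<-|]; [assumption|].
      destruct (creep_bound_right_open s ltac:(lra) HS Hbound) as [t [Hst Ht]].
      specialize (Hub t Ht). lra.
Qed.

Lemma creep_increment_le : V b - V a < eps * (b - a) + eps.
Proof.
  destruct creep_bound_b as [_ [p [u [v [n [Hcc Hbound]]]]]].
  pose proof (covering_chain_small b p u v n (Rle_refl b) Hcc). lra.
Qed.

End Creep.

Lemma ac_nonincreasing_closed (V : R -> R) (a b : R) (S : R -> Prop) :
  a < b -> null_set S -> abs_continuous_on V a b ->
  (forall s, a <= s <= b -> ~ S s -> upper_dini_nonpos V s) -> V b <= V a.
Proof.
  intros Hab HS Hac Hdini.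
  assert (Hincr : forall eps, 0 < eps -> V b - V a < eps * (b - a) + eps).
  { intros eps Heps. destruct (Hac eps Heps) as [delta [Hdelta Hsmall]].
    destruct (HS (delta / 2) ltac:(lra)) as [c [d [Hcd [Hlen Hcover]]]].
    exact (creep_increment_le V a b eps delta c d Hab Heps Hdelta Hsmall Hcd Hlen
             S Hcover Hdini). }
  apply Rnot_lt_le. intros Hlt.
  set (eps := (V b - V a) / (b - a + 1)).
  assert (Heps : 0 < eps) by (apply Rdiv_lt_0_compat; lra).
  specialize (Hincr eps Heps).
  assert (eps * (b - a) + eps = V b - V a) by (unfold eps; field; lra). lra.
Qed.

(* Near [a], [V] stays below [V b] if [V b > V a]; apply the closed version from there. *)
Lemma ac_nonincreasing (V : R -> R) (a b : R) (S : R -> Prop) :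
  a <= b -> null_set S -> abs_continuous_on V a b ->
  (forall s, a < s <= b -> ~ S s -> upper_dini_nonpos V s) -> V b <= V a.
Proof.
  intros Hab HS Hac Hdini. destruct (Req_dec b a) as [->|Hba]; [lra|].
  apply Rnot_lt_le. intros Hlt.
  destruct (abs_continuous_on_unif V a b Hac (V b - V a)) as [delta [Hdelta Hunif]]; [lra|].
  set (a' := a + Rmin delta (b - a) / 2).
  pose proof (Rmin_l delta (b - a)). pose proof (Rmin_r delta (b - a)).
  assert (0 < Rmin delta (b - a)) by (apply Rmin_pos; lra).
  assert (V b <= V a').
  { apply (ac_nonincreasing_closed V a' b S); [unfold a'; lra|assumption| |].
    - apply (abs_continuous_on_sub V a b); [unfold a'; lra|lra|assumption].
    - intros s Hs. apply Hdini. unfold a' in Hs. lra. }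
  assert (Rabs (V a' - V a) < V b - V a) by (apply Hunif; unfold a'; lra).
  unfold Rabs in *. destruct Rcase_abs; lra.
Qed.

Lemma derivable_pt_lim_upper_dini_nonpos f s l :
  derivable_pt_lim f s l -> l <= 0 -> upper_dini_nonpos f s.
Proof.
  intros Hf Hl. split; intros e He; destruct (Hf e He) as [delta Hdelta];
    exists delta; split; try apply cond_pos; intros t Ht;
    specialize (Hdelta (t - s) ltac:(lra));
    replace (s + (t - s)) with t in Hdelta by ring;
    set (q := (f t - f s) / (t - s)) in Hdelta;
    assert (Hdiff : f t - f s = q * (t - s)) by (unfold q; field; lra).
  - assert (Hq : Rabs (q - l) < e) by (apply Hdelta; rewrite Rabs_pos_eq; lra).
    apply Rabs_def2 in Hq. nra.
  - assert (Hq : Rabs (q - l) < e) by (apply Hdelta; rewrite Rabs_left; lra).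
    apply Rabs_def2 in Hq. nra.
Qed.

Lemma derivable_pt_lim_near f s l : derivable_pt_lim f s l ->
  forall e, 0 < e -> exists h, 0 < h /\ forall t, Rabs (t - s) < h -> Rabs (f t - f s) < e.
Proof.
  intros Hf e He.
  destruct (derivable_continuous_pt f s (exist _ l Hf) e He) as [h [Hh Hnear]].
  exists h. split; [assumption|]. intros t Ht.
  destruct (Req_dec t s) as [->|Hts]; [rewrite Rminus_diag, Rabs_R0; assumption|].
  apply (Hnear t). split; [split; [exact I|auto]|exact Ht].
Qed.

Section MaxOfDifferentiable.
Variables (n : nat) (g : nat -> R -> R) (s : R).
Hypothesis Hg : forall i, (i < n)%nat -> exists l, derivable_pt_lim (g i) s l /\
  (g i s = rmax n (fun j => g j s) -> l <= 0).

Let M := rmax n (fun j => g j s).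

Lemma rmax_upper_dini_right e : 0 < e ->
  exists h, 0 < h /\ forall t, s < t < s + h -> rmax n (fun j => g j t) <= M + e * (t - s).
Proof.
  intros He.
  enough (forall k, (k <= n)%nat -> exists h, 0 < h /\
            forall t, s < t < s + h -> rmax k (fun j => g j t) <= M + e * (t - s))
    by auto.
  induction k as [|k IH]; intros Hk.
  - exists 1. split; [lra|]. intros t Ht. simpl. pose proof (rmax_ge0 n (fun j => g j s)).
    unfold M. nra.
  - destruct (IH ltac:(lia)) as [h1 [Hh1 H1]].
    destruct (Hg k ltac:(lia)) as [l [Hder Hl]].
    assert (Hmax : g k s <= M) by (apply (rmax_ge n (fun j => g j s)); lia).
    assert (exists h2, 0 < h2 /\ forall t, s < t < s + h2 -> g k t <= M + e * (t - s))
      as [h2 [Hh2 H2]].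
    { destruct (Req_dec (g k s) M) as [Heq|Hlt].
      - destruct (derivable_pt_lim_upper_dini_nonpos _ _ _ Hder (Hl Heq)) as [Hright _].
        destruct (Hright e He) as [h2 [Hh2 H2]].
        exists h2. split; [assumption|]. intros t Ht. rewrite <- Heq. apply H2, Ht.
      - destruct (derivable_pt_lim_near _ _ _ Hder (M - g k s)) as [h2 [Hh2 H2]]; [lra|].
        exists h2. split; [assumption|]. intros t Ht.
        assert (Hnear : Rabs (g k t - g k s) < M - g k s)
          by (apply H2; rewrite Rabs_pos_eq; lra).
        apply Rabs_def2 in Hnear. nra. }
    exists (Rmin h1 h2). split; [apply Rmin_pos; assumption|]. intros t Ht.
    pose proof (Rmin_l h1 h2). pose proof (Rmin_r h1 h2). simpl.
    apply Rmax_lub; [apply H1|apply H2]; lra.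
Qed.

Lemma rmax_upper_dini_left e : 0 < e ->
  exists h, 0 < h /\ forall t, s - h < t < s -> M <= rmax n (fun j => g j t) + e * (s - t).
Proof.
  intros He. destruct (rmax_attained n (fun j => g j s)) as [Hzero|[i [Hi Heq]]].
  - exists 1. split; [lra|]. intros t Ht. pose proof (rmax_ge0 n (fun j => g j t)).
    unfold M. rewrite Hzero. nra.
  - destruct (Hg i Hi) as [l [Hder Hl]].
    destruct (derivable_pt_lim_upper_dini_nonpos _ _ _ Hder (Hl (eq_sym Heq))) as [_ Hleft].
    destruct (Hleft e He) as [h [Hh H]]. exists h. split; [assumption|]. intros t Ht.
    pose proof (rmax_ge n (fun j => g j t) i Hi). specialize (H t Ht).
    unfold M. rewrite Heq. lra.
Qed.

Lemma rmax_upper_dini_nonpos : upper_dini_nonpos (fun t => rmax n (fun j => g j t)) s.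
Proof. split; [apply rmax_upper_dini_right|apply rmax_upper_dini_left]. Qed.

End MaxOfDifferentiable.

Lemma derivable_pt_lim_rsum n (f : nat -> R -> R) s (l : nat -> R) :
  (forall k, (k < n)%nat -> derivable_pt_lim (f k) s (l k)) ->
  derivable_pt_lim (fun t => rsum n (fun k => f k t)) s (rsum n l).
Proof.
  induction n as [|n IH]; intros Hf; simpl.
  - apply derivable_pt_lim_const.
  - apply (derivable_pt_lim_plus (fun t => rsum n (fun k => f k t)) (f n));
      [apply IH; intros; apply Hf|apply Hf]; lia.
Qed.

Lemma derivable_pt_lim_sub_const f c s l :
  derivable_pt_lim f s l -> derivable_pt_lim (fun t => f t - c) s l.
Proof.
  intros Hf. replace l with (l - 0) by ring.
  apply (derivable_pt_lim_minus f (fct_cte c)); [exact Hf|apply derivable_pt_lim_const].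
Qed.

Lemma derivable_pt_lim_sq_sub f c s l : derivable_pt_lim f s l ->
  derivable_pt_lim (fun t => (f t - c) ^ 2) s (2 * (f s - c) * l).
Proof.
  intros Hf. apply derivable_pt_lim_sub_const with (c := c) in Hf.
  pose proof (derivable_pt_lim_mult _ _ s l l Hf Hf) as Hsq.
  apply (derivable_pt_lim_ext (mult_fct (fun t => f t - c) (fun t => f t - c)));
    [intros t; unfold mult_fct; ring|].
  replace (2 * (f s - c) * l) with (l * (f s - c) + (f s - c) * l) by ring. exact Hsq.
Qed.

(** * Absolute continuity along trajectories *)

Lemma abs_continuous_on_opp f a b :
  abs_continuous_on f a b -> abs_continuous_on (fun t => - f t) a b.
Proof.
  intros Hf. apply (abs_continuous_on_dominated _ (fun u v => Rabs (f v - f u))); [|exact Hf].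
  intros u v _ _ _. replace (- f v - - f u) with (- (f v - f u)) by ring. rewrite Rabs_Ropp. lra.
Qed.

Lemma abs_continuous_on_sq_sub f c a b : a <= b -> abs_continuous_on f a b ->
  abs_continuous_on (fun t => (f t - c) ^ 2) a b.
Proof.
  intros Hab Hf. destruct (abs_continuous_on_bounded f a b Hab Hf) as [M HM].
  assert (HM0 : 0 <= M) by (pose proof (HM a ltac:(lra)); pose proof (Rabs_pos (f a)); lra).
  apply (abs_continuous_on_dominated _ (fun u v => (2 * M + 2 * Rabs c) * Rabs (f v - f u))).
  - intros u v Hu Huv Hv. pose proof (HM u ltac:(lra)). pose proof (HM v ltac:(lra)).
    replace ((f v - c) ^ 2 - (f u - c) ^ 2) with ((f v + f u - 2 * c) * (f v - f u)) by ring.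
    rewrite Rabs_mult. apply Rmult_le_compat_r; [apply Rabs_pos|].
    unfold Rminus. eapply Rle_trans; [apply Rabs_triang|].
    rewrite Rabs_Ropp, Rabs_mult, (Rabs_pos_eq 2) by lra.
    pose proof (Rabs_triang (f v) (f u)). lra.
  - apply ac_interval_fun_scal; [pose proof (Rabs_pos c); lra|exact Hf].
Qed.

Lemma abs_continuous_on_dot m (h : nat -> R) (y : R -> nat -> R) a b :
  (forall k, (k < m)%nat -> abs_continuous_on (fun t => y t k) a b) ->
  abs_continuous_on (fun t => dot m h (y t)) a b.
Proof.
  intros Hy.
  apply (abs_continuous_on_dominated _ (fun u v => rsum m (fun k => Rabs (h k) * Rabs (y v k - y u k)))).
  - intros u v _ _ _. unfold dot. rewrite <- rsum_sub.
    eapply Rle_trans; [apply rsum_Rabs_le|]. apply rsum_le. intros k _.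
    rewrite <- Rabs_mult. right. f_equal. ring.
  - apply ac_interval_fun_sum. intros k Hk. apply ac_interval_fun_scal; [apply Rabs_pos|].
    apply Hy, Hk.
Qed.

Lemma abs_continuous_on_rmax_dist2 N m (x : R -> nat -> nat -> R) ys a b : a <= b ->
  (forall i k, (i < N)%nat -> (k < m)%nat -> abs_continuous_on (fun t => x t i k) a b) ->
  abs_continuous_on (fun t => rmax N (fun i => dist2 m (x t i) ys)) a b.
Proof.
  intros Hab Hx.
  apply (abs_continuous_on_dominated _ (fun u v => rsum N (fun i => rsum m (fun k =>
      Rabs ((x v i k - ys k) ^ 2 - (x u i k - ys k) ^ 2))))).
  - intros u v _ _ _. eapply Rle_trans; [apply rmax_Rabs_sub|].
    apply rsum_le. intros i Hi. unfold dist2. rewrite <- rsum_sub. apply rsum_Rabs_le.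
  - apply ac_interval_fun_sum. intros i Hi. apply ac_interval_fun_sum. intros k Hk.
    apply (abs_continuous_on_sq_sub (fun t => x t i k)); auto.
Qed.

Lemma ac_const (f : R -> R) (a b : R) (S : R -> Prop) :
  a <= b -> null_set S -> abs_continuous_on f a b ->
  (forall s, a < s <= b -> ~ S s -> derivable_pt_lim f s 0) -> f b = f a.
Proof.
  intros Hab HS Hf Hder. apply Rle_antisym.
  - apply (ac_nonincreasing f a b S Hab HS Hf). intros s Hs HSs.
    apply (derivable_pt_lim_upper_dini_nonpos f s 0); [apply Hder; auto|lra].
  - enough (- f b <= - f a) by lra.
    apply (ac_nonincreasing (fun t => - f t) a b S Hab HS (abs_continuous_on_opp f a b Hf)).
    intros s Hs HSs. apply (derivable_pt_lim_upper_dini_nonpos _ s (- 0));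
      [apply derivable_pt_lim_opp, Hder; auto|lra].
Qed.

Lemma derivable_pt_lim_dist2 m (y : R -> nat -> R) (dy : nat -> R) ys s :
  (forall k, (k < m)%nat -> derivable_pt_lim (fun t => y t k) s (dy k)) ->
  derivable_pt_lim (fun t => dist2 m (y t) ys) s
    (rsum m (fun k => 2 * (y s k - ys k) * dy k)).
Proof.
  intros Hy. apply (derivable_pt_lim_rsum m (fun k t => (y t k - ys k) ^ 2)).
  intros k Hk. apply derivable_pt_lim_sq_sub, Hy, Hk.
Qed.

Lemma derivable_pt_lim_dot m h (y : R -> nat -> R) (dy : nat -> R) s :
  (forall k, (k < m)%nat -> derivable_pt_lim (fun t => y t k) s (dy k)) ->
  derivable_pt_lim (fun t => dot m h (y t)) s (dot m h dy).
Proof.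
  intros Hy. apply (derivable_pt_lim_rsum m (fun k t => h k * y t k)).
  intros k Hk. apply (derivable_pt_lim_scal (fun t => y t k)), Hy, Hk.
Qed.

Lemma trajectory_ballN_invariant N m (F : vfield) t0 x ys r :
  trajectory N m F t0 x ->
  (forall s i, t0 < s -> (i < N)%nat ->
     (forall j, (j < N)%nat -> dist2 m (x s j) ys <= dist2 m (x s i) ys) ->
     rsum m (fun k => 2 * (x s i k - ys k) * F s (x s) i k) <= 0) ->
  ballN N m ys r (x t0) -> forall T, t0 <= T -> ballN N m ys r (x T).
Proof.
  intros [Hac [S [HS Hder]]] Hdescent Hball0 T HT.
  set (V := fun t => rmax N (fun i => dist2 m (x t i) ys)).
  assert (HV : V T <= V t0).
  { apply (ac_nonincreasing V t0 T S HT HS); [apply abs_continuous_on_rmax_dist2; auto|].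
    intros s Hs HSs. apply rmax_upper_dini_nonpos. intros i Hi.
    eexists. split.
    - apply derivable_pt_lim_dist2. intros k Hk. apply Hder; auto. lra.
    - intros Hmax. apply Hdescent; [lra|assumption|].
      intros j Hj. rewrite Hmax. apply (rmax_ge N (fun j => dist2 m (x s j) ys)), Hj. }
  assert (V t0 <= r ^ 2) by (apply rmax_lub; [apply pow2_ge_0|exact Hball0]).
  intros i Hi. pose proof (rmax_ge N (fun j => dist2 m (x T j) ys) i Hi). unfold V in *. lra.
Qed.

Lemma trajectory_dot_const N m (F : vfield) t0 x h i :
  trajectory N m F t0 x -> (i < N)%nat ->
  (forall s, t0 < s -> dot m h (F s (x s) i) = 0) ->
  forall T, t0 <= T -> dot m h (x T i) = dot m h (x t0 i).
Proof.
  intros [Hac [S [HS Hder]]] Hi Hflow T HT.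
  apply (ac_const (fun t => dot m h (x t i)) t0 T S HT HS).
  - apply abs_continuous_on_dot. intros k Hk. apply Hac; auto.
  - intros s Hs HSs. rewrite <- (Hflow s ltac:(lra)).
    apply derivable_pt_lim_dot. intros k Hk. apply Hder; auto. lra.
Qed.

(** * The two flows *)

Lemma rsum_nbr_sum_comm N m (b : nat -> bool) (w : nat -> R) (c : nat -> R)
    (y : nat -> nat -> R) :
  rsum m (fun k => c k * rsum N (fun j => if b j then w j * y j k else 0)) =
  rsum N (fun j => if b j then w j * rsum m (fun k => c k * y j k) else 0).
Proof.
  rewrite (rsum_ext m _ (fun k => rsum N (fun j => if b j then w j * (c k * y j k) else 0))).
  2:{ intros k _. rewrite <- rsum_scal. apply rsum_ext. intros j _. destruct (b j); ring. }
  rewrite rsum_comm. apply rsum_ext. intros j _.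
  destruct (b j); [now rewrite rsum_scal|apply rsum_0].
Qed.

Lemma dot_sub m h y y' : dot m h y - dot m h y' = rsum m (fun k => h k * (y k - y' k)).
Proof. unfold dot. rewrite <- rsum_sub. apply rsum_ext. intros; ring. Qed.

(* [2 <x - ys, y - x> <= |y - ys|^2 - |x - ys|^2]: the two sides differ by [|y - x|^2]. *)
Lemma rsum_cross_le m (x y ys : nat -> R) :
  rsum m (fun k => (x k - ys k) * (y k - x k)) <= / 2 * (dist2 m y ys - dist2 m x ys).
Proof.
  unfold dist2. rewrite <- rsum_sub, <- rsum_scal. apply rsum_le. intros k _.
  pose proof (pow2_ge_0 (y k - x k)). nra.
Qed.

Lemma dot_projA m H z i y : dot m (H i) (H i) = 1 -> dot m (H i) (projA m H z i y) = z i.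
Proof.
  intros Hh. unfold projA. set (al := dot m (H i) y). unfold dot in *.
  rewrite (rsum_ext m _ (fun k => (H i k * y k + - al * (H i k * H i k)) + z i * (H i k * H i k)))
    by (intros; ring).
  rewrite !rsum_add, !rsum_scal, Hh. unfold al, dot. ring.
Qed.

Lemma dot_proj_cons_field N m H z E a s X i : dot m (H i) (H i) = 1 ->
  dot m (H i) (proj_cons_field N m H z E a s X i) = 0.
Proof.
  intros Hh. unfold dot, proj_cons_field, nbr_sum. rewrite rsum_nbr_sum_comm.
  transitivity (rsum N (fun _ => 0)); [|apply rsum_0].
  apply rsum_ext. intros j _. destruct (E s j i); [|reflexivity].
  rewrite (rsum_ext m _ (fun k => H i k * projA m H z i (X j) k - H i k * projA m H z i (X i) k))
    by (intros; ring).
  rewrite rsum_sub. fold (dot m (H i) (projA m H z i (X j))) (dot m (H i) (projA m H z i (X i))).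
  rewrite !dot_projA by assumption. ring.
Qed.

Lemma nbr_sum_cross_nonpos N m E i s (w : nat -> R) (Y : nat -> nat -> R) y ys :
  (forall j, (j < N)%nat -> 0 <= w j) ->
  (forall j, (j < N)%nat -> dist2 m (Y j) ys <= dist2 m y ys) ->
  rsum m (fun k => (y k - ys k) * nbr_sum N E i s (fun j => w j * (Y j k - y k))) <= 0.
Proof.
  intros Hw HY. unfold nbr_sum. rewrite rsum_nbr_sum_comm.
  apply rsum_nonpos. intros j Hj. destruct (E s j i); [|lra].
  pose proof (rsum_cross_le m y (Y j) ys). specialize (HY j Hj). specialize (Hw j Hj).
  assert (rsum m (fun k => (y k - ys k) * (Y j k - y k)) <= 0) by lra. nra.
Qed.

Lemma rsum_cross_projA m H z i y ys : dot m (H i) ys = z i ->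
  rsum m (fun k => (y k - ys k) * (projA m H z i y k - y k)) = - (dot m (H i) y - z i) ^ 2.
Proof.
  intros Hys. unfold projA.
  rewrite (rsum_ext m _ (fun k => - (dot m (H i) y - z i) * (H i k * (y k - ys k))))
    by (intros; ring).
  rewrite rsum_scal, <- dot_sub, Hys. ring.
Qed.

Lemma projA_inA m H z i y : inA m H z i y -> forall k, projA m H z i y k = y k.
Proof. unfold inA, projA. intros Hy k. rewrite Hy. ring. Qed.

Lemma dist2_projA m H z i y ys : dot m (H i) (H i) = 1 -> dot m (H i) ys = z i ->
  dist2 m (projA m H z i y) ys = dist2 m y ys - (dot m (H i) y - z i) ^ 2.
Proof.
  intros Hh Hys. set (al := dot m (H i) y - z i).
  assert (Hal : al = rsum m (fun k => H i k * (y k - ys k))) by (unfold al; rewrite <- Hys; apply dot_sub).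
  unfold dist2, projA.
  rewrite (rsum_ext m _ (fun k => ((y k - ys k) ^ 2 + (- 2 * al) * (H i k * (y k - ys k)))
                                   + (al * al) * (H i k * H i k))) by (intros; unfold al; ring).
  rewrite !rsum_add, !rsum_scal, <- Hal. unfold dot in Hh. rewrite Hh. ring.
Qed.

Lemma cons_proj_field_descent N m H z E a K s X ys i :
  0 <= K -> (forall j, (j < N)%nat -> 0 <= a i j s) -> dot m (H i) ys = z i ->
  (forall j, (j < N)%nat -> dist2 m (X j) ys <= dist2 m (X i) ys) ->
  rsum m (fun k => 2 * (X i k - ys k) * cons_proj_field N m H z E a K s X i k) <= 0.
Proof.
  intros HK Ha Hys Hmax. unfold cons_proj_field.
  rewrite (rsum_ext m _ (fun k => (2 * K) * ((X i k - ys k) *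
       nbr_sum N E i s (fun j => a i j s * (X j k - X i k)))
     + 2 * ((X i k - ys k) * (projA m H z i (X i) k - X i k)))) by (intros; ring).
  rewrite rsum_add, !rsum_scal, rsum_cross_projA by assumption.
  pose proof (nbr_sum_cross_nonpos N m E i s (fun j => a i j s) X (X i) ys Ha Hmax).
  pose proof (pow2_ge_0 (dot m (H i) (X i) - z i)). nra.
Qed.

(* On [A_i] the field is a consensus field for the projected states [P_{A_i}(x_j)], which
   are no farther from [ys] than the [x_j] because [ys] lies in [A_i]. *)
Lemma proj_cons_field_descent N m H z E a s X ys i :
  (forall j, (j < N)%nat -> 0 <= a i j s) ->
  dot m (H i) (H i) = 1 -> dot m (H i) ys = z i -> inA m H z i (X i) ->
  (forall j, (j < N)%nat -> dist2 m (X j) ys <= dist2 m (X i) ys) ->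
  rsum m (fun k => 2 * (X i k - ys k) * proj_cons_field N m H z E a s X i k) <= 0.
Proof.
  intros Ha Hh Hys HXi Hmax. unfold proj_cons_field.
  rewrite (rsum_ext m _ (fun k => 2 * ((X i k - ys k) *
       nbr_sum N E i s (fun j => a i j s * (projA m H z i (X j) k - X i k)))))
    by (intros k _; rewrite (projA_inA m H z i (X i) HXi k); ring).
  rewrite rsum_scal.
  enough (rsum m (fun k => (X i k - ys k) *
            nbr_sum N E i s (fun j => a i j s * (projA m H z i (X j) k - X i k))) <= 0) by lra.
  apply nbr_sum_cross_nonpos; [exact Ha|]. intros j Hj.
  rewrite dist2_projA by assumption.
  pose proof (pow2_ge_0 (dot m (H i) (X j) - z i)). specialize (Hmax j Hj). lra.
Qed.

Lemma weights_nonneg N a i j s : weights_assumption N a -> (i < N)%nat -> (j < N)%nat ->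
  0 <= s -> 0 <= a i j s.
Proof.
  intros [astar [_ Ha]] Hi Hj Hs. destruct (Ha i j Hi Hj) as [Hpos _].
  specialize (Hpos s Hs). lra.
Qed.

Lemma cons_proj_ballN_invariant N m H z E a K ys r :
  (forall i, (i < N)%nat -> mat_vec m H ys i = z i) ->
  weights_assumption N a -> 0 < K ->
  positively_invariant N m (cons_proj_field N m H z E a K) (ballN N m ys r).
Proof.
  intros Hys Ha HK t0 x Ht0 Hx. apply (trajectory_ballN_invariant N m _ t0 x ys r Hx).
  intros s i Hs Hi Hmax. apply cons_proj_field_descent; [lra| |apply Hys, Hi|exact Hmax].
  intros j Hj. apply (weights_nonneg N); auto. lra.
Qed.

Lemma proj_cons_ballN_A_invariant N m H z E a ys r :
  (forall i, (i < N)%nat -> dot m (H i) (H i) = 1) ->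
  (forall i, (i < N)%nat -> mat_vec m H ys i = z i) ->
  weights_assumption N a ->
  positively_invariant N m (proj_cons_field N m H z E a) (ballN_A N m H z ys r).
Proof.
  intros Hh Hys Ha t0 x Ht0 Hx [Hball0 HA0].
  assert (HA : forall t, t0 <= t -> forall i, (i < N)%nat -> inA m H z i (x t i)).
  { intros t Ht i Hi. unfold inA. rewrite <- (HA0 i Hi).
    apply (trajectory_dot_const N m _ t0 x (H i) i Hx Hi); [|exact Ht].
    intros s _. apply dot_proj_cons_field, Hh, Hi. }
  intros T HT. split; [|intros i Hi; apply HA; assumption].
  apply (trajectory_ballN_invariant N m _ t0 x ys r Hx); [|exact Hball0|exact HT].
  intros s i Hs Hi Hmax.
  apply proj_cons_field_descent; [|apply Hh, Hi|apply Hys, Hi|apply HA; [lra|exact Hi]|exact Hmax].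
  intros j Hj. apply (weights_nonneg N); auto. lra.
Qed.

Theorem lemma6 (N m : nat) (H : nat -> nat -> R) (z : nat -> R) :
  (1 <= N)%nat -> (1 <= m)%nat ->
  (forall i, (i < N)%nat -> dot m (H i) (H i) = 1) ->
  (exists y : nat -> R, forall i, (i < N)%nat -> mat_vec m H y i = z i) ->
  forall (ys : nat -> R),
  (forall i, (i < N)%nat -> mat_vec m H ys i = z i) ->
  forall r : R, 0 < r ->
  forall (E : graph_signal) (a : weights), weights_assumption N a ->
  forall K : R, 0 < K ->
    positively_invariant N m (cons_proj_field N m H z E a K) (ballN N m ys r)
    /\ positively_invariant N m (proj_cons_field N m H z E a)
         (ballN_A N m H z ys r).
Proof.
  intros _ _ Hh _ ys Hys r _ E a Ha K HK. split.
  - exact (cons_proj_ballN_invariant N m H z E a K ys r Hys Ha HK).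
  - exact (proj_cons_ballN_A_invariant N m H z E a ys r Hh Hys Ha).
Qed.
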